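(* Let $S\subset\mathbb P^1$ be finite and let $(\mathcal E,\theta)$ be a parabolic system of Hodge bundles of type $(1,1)$ over $\mathbb P^1$ with parabolic structure at $S$, i.e. $\mathcal E=\mathcal L\oplus\mathcal L'$ with $\mathcal L,\mathcal L'$ line bundles carrying weights $\alpha(p),\alpha'(p)$ at $p\in S$ and $\theta:\mathcal L\to\mathcal L'\otimes\Omega^1_{\mathbb P^1}(\log S)$. If $(\mathcal E,\theta)$ is stable as a parabolic Higgs bundle, then $\mathcal E$ (forgetting $\theta$) is not stable as a parabolic vector bundle.
   Context: Weights satisfy $|\alpha(p)-\alpha'(p)|<1$ for each $p$. For a line subbundle $\mathcal F\subset\mathcal E$, its parabolic degree is $\deg\mathcal F$ plus, for each $p\in S$, the weight induced on $\mathcal F_p$ by the weighted flag of $\mathcal E_p$ (the larger of $\alpha(p),\alpha'(p)$ is carried by the corresponding line, the smaller by $\mathcal E_p$; if equal, $\mathcal E_p$ carries that weight); $\mathrm{pardeg}\,\mathcal E=\deg\mathcal E+\sum_p(\alpha(p)+\alpha'(p))$. $\mathcal E$ is stable as a parabolic bundle if every line subbundle $\mathcal F$ has $\mathrm{pardeg}\,\mathcal F<\mathrm{pardeg}\,\mathcal E/2$; $(\mathcal E,\theta)$ is stable as a parabolic Higgs bundle if this holds for every line subbundle $\mathcal F$ with $\theta(\mathcal F)\subset\mathcal F\otimes\Omega^1(\log S)$ (here $\theta$ is extended to $\mathcal E$ by $\theta(\mathcal L')=0$). *)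

From HB Require Import structures.
From mathcomp Require Import all_boot all_order all_algebra.
From mathcomp Require Import reals complex.
Set Implicit Arguments. Unset Strict Implicit. Unset Printing Implicit Defensive.
Import Order.TTheory GRing.Theory Num.Theory.
Local Open Scope ring_scope.

(* Points of P^1(k) are [Some x] (the point [x:1]) or [None] (the point [1:0]). *)
Definition P1 (k : Type) := option k.

Section P1Defs.
Variable k : nzRingType.

(* A section of O(d) on P^1 is a homogeneous polynomial of degree d in X0,X1,
   represented by its dehomogenization p(x) = f(x,1); it is a section of O(d)
   iff d >= 0 and size p <= d+1, or d < 0 and p = 0. *)
Definition is_section (d : int) (p : {poly k}) : bool :=
  if (d < 0)%R then p == 0 else (size p <= (absz d).+1)%N.

(* Value of the section p of O(d) at a point, in the standard local
   trivialisation of O(d) at that point (f(x,1) resp. f(1,0)). *)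
Definition ev (d : int) (p : {poly k}) (z : P1 k) : k :=
  match z with Some x => p.[x] | None => p`_(absz d) end.
End P1Defs.

(* Every line bundle on P^1 is O(d).  A rank-one subbundle F = O(c) of
   E = L (+) L' = O(a) (+) O(b) is given by a pair (s,t) of sections of
   O(a-c), O(b-c) without common zero; its fibre at z is the line spanned by
   (s(z), t(z)) in E_z = L_z (+) L'_z. *)
Definition is_line_subbundle (k : nzRingType) (a b c : int) (s t : {poly k}) : Prop :=
  [/\ is_section (a - c) s, is_section (b - c) t &
      forall z : P1 k, ev (a - c) s z != 0 \/ ev (b - c) t z != 0].

Section Parabolic.
Variable R : realType.
Local Notation C := R[i].

(* Weight induced on the fibre F_p (spanned by (sz,tz) in L_p (+) L'_p) by the
   weighted flag of E_p: the larger of alpha(p), alpha'(p) is carried by the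
   corresponding line, the smaller by E_p; if equal E_p carries it. *)
Definition induced_weight (al al' : R) (sz tz : C) : R :=
  if al' < al then (if tz == 0 then al else al')
  else if al < al' then (if sz == 0 then al' else al)
  else al.

Definition pardeg_sub (S : seq (P1 C)) (al al' : P1 C -> R)
    (a b c : int) (s t : {poly C}) : R :=
  c%:~R + \sum_(p <- S) induced_weight (al p) (al' p) (ev (a - c) s p) (ev (b - c) t p).

Definition pardeg_E (S : seq (P1 C)) (al al' : P1 C -> R) (a b : int) : R :=
  (a + b)%:~R + \sum_(p <- S) (al p + al' p).

Definition par_stable (S : seq (P1 C)) (al al' : P1 C -> R) (a b : int) : Prop :=
  forall (c : int) (s t : {poly C}), is_line_subbundle a b c s t ->
    pardeg_sub S al al' a b c s t < pardeg_E S al al' a b / 2.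

(* Higgs field theta : L -> L' (x) Omega^1(log S) = O(b - a - 2 + #S),
   extended by theta(L') = 0, i.e. theta(u,v) = (0, theta u).
   F is theta-invariant iff theta(F_z) subset F_z (x) Omega_z at every z. *)
Definition higgs_degree (S : seq (P1 C)) (a b : int) : int :=
  b - a - 2 + (size S)%:Z.

Definition theta_invariant (S : seq (P1 C)) (a b c : int)
    (theta s t : {poly C}) : Prop :=
  forall z : P1 C, exists lam : C,
    0 = lam * ev (a - c) s z /\
    ev (higgs_degree S a b) theta z * ev (a - c) s z = lam * ev (b - c) t z.

Definition higgs_stable (S : seq (P1 C)) (al al' : P1 C -> R) (a b : int)
    (theta : {poly C}) : Prop :=
  forall (c : int) (s t : {poly C}), is_line_subbundle a b c s t ->
    theta_invariant S a b c theta s t ->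
    pardeg_sub S al al' a b c s t < pardeg_E S al al' a b / 2.
End Parabolic.

From HB Require Import structures.
From mathcomp Require Import all_boot all_order all_algebra.
From mathcomp Require Import reals complex.
Import Order.TTheory GRing.Theory Num.Theory.
Local Open Scope ring_scope.

(* Since theta vanishes on L', the summand L' is theta-invariant, so Higgs
   stability gives pardeg L' < pardeg E / 2.  The parabolic degrees of the
   two summands L and L' add up to pardeg E, hence pardeg L > pardeg E / 2
   and L destabilises E as a parabolic bundle. *)

Section Sections.
Variable k : nzRingType.

Lemma ev_poly0 (d : int) (z : P1 k) : ev d 0 z = 0.
Proof. by case: z => [x|] /=; rewrite ?horner0 ?coef0. Qed.

Lemma ev_poly1 (z : P1 k) : ev 0 1 z = 1.
Proof. by case: z => [x|] /=; rewrite ?hornerC ?coefC. Qed.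

Lemma is_section0 (d : int) : is_section d (0 : {poly k}).
Proof. by rewrite /is_section size_poly0; case: ifP. Qed.

Lemma is_section1 : is_section 0 (1 : {poly k}).
Proof. by rewrite /is_section /= size_poly1. Qed.

Lemma first_summand_subbundle (a b : int) : is_line_subbundle a b a (1 : {poly k}) 0.
Proof.
split; rewrite ?subrr; [exact: is_section1 | exact: is_section0 |].
by move=> z; left; rewrite ev_poly1 oner_neq0.
Qed.

Lemma second_summand_subbundle (a b : int) : is_line_subbundle a b b 0 (1 : {poly k}).
Proof.
split; rewrite ?subrr; [exact: is_section0 | exact: is_section1 |].
by move=> z; right; rewrite ev_poly1 oner_neq0.
Qed.

End Sections.

Section Parabolic.
Variable R : realType.
Local Notation C := R[i].

Lemma induced_weight_first (al al' : R) (s : C) :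
  s != 0 -> induced_weight al al' s 0 = al.
Proof. by move=> /negPf s_neq0; rewrite /induced_weight eqxx s_neq0; case: ltgtP. Qed.

Lemma induced_weight_second (al al' : R) (t : C) :
  t != 0 -> induced_weight al al' 0 t = al'.
Proof.
by move=> /negPf t_neq0; rewrite /induced_weight eqxx t_neq0; case: ltgtP => // ->.
Qed.

Variables (S : seq (P1 C)) (al al' : P1 C -> R) (a b : int).

Lemma pardeg_first_summand :
  pardeg_sub S al al' a b a 1 0 = a%:~R + \sum_(p <- S) al p.
Proof.
congr (_ + _); apply: eq_bigr => p _.
by rewrite subrr ev_poly1 ev_poly0 induced_weight_first ?oner_neq0.
Qed.

Lemma pardeg_second_summand :
  pardeg_sub S al al' a b b 0 1 = b%:~R + \sum_(p <- S) al' p.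
Proof.
congr (_ + _); apply: eq_bigr => p _.
by rewrite subrr ev_poly1 ev_poly0 induced_weight_second ?oner_neq0.
Qed.

Lemma pardeg_summandsD :
  pardeg_sub S al al' a b a 1 0 + pardeg_sub S al al' a b b 0 1
  = pardeg_E S al al' a b.
Proof.
rewrite pardeg_first_summand pardeg_second_summand /pardeg_E big_split intrD /=.
by rewrite addrACA.
Qed.

Lemma second_summand_theta_invariant (theta : {poly C}) :
  theta_invariant S a b b theta 0 1.
Proof. by move=> z; exists 0; rewrite ev_poly0 !mul0r mulr0. Qed.

End Parabolic.

Theorem proposition8p2 (R : realType) (S : seq (P1 R[i])) (a b : int)
    (al al' : P1 R[i] -> R) (theta : {poly R[i]}) :
  uniq S ->
  (forall p, p \in S -> `|al p - al' p| < 1) ->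
  is_section (higgs_degree S a b) theta ->
  higgs_stable S al al' a b theta ->
  ~ par_stable S al al' a b.
Proof.
move=> _ _ _ higgs_st par_st.
have L'_small := higgs_st b 0 1 (second_summand_subbundle _ a b)
  (second_summand_theta_invariant _ S a b theta).
have L_small := par_st a 1 0 (first_summand_subbundle _ a b).
have := ltrD L_small L'_small.
by rewrite pardeg_summandsD -splitr ltxx.
Qed.
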